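(* For any tile sets $\mathcal{T},\mathcal{U},\mathcal{B}$ with mutually consistent frequencies, $d(\mathcal{T},\mathcal{U};\mathcal{B})\le 2$. If moreover $\mathcal{T},\mathcal{U},\mathcal{B}$ consist only of exact tiles, then $d(\mathcal{T},\mathcal{U};\mathcal{B})\le 1$.
   Context: Fix $n,m\ge1$; $\mathcal{D}$ is the set of $n\times m$ binary matrices. A tile is $T=(t(T),a(T))$ with nonempty $t(T)\subseteq\{1..n\}$, $a(T)\subseteq\{1..m\}$, $\mathrm{area}(T)=t(T)\times a(T)$. $\mathrm{fr}(T;D)=\frac1{|\mathrm{area}(T)|}\sum_{(i,j)\in\mathrm{area}(T)}D(i,j)$, $\mathrm{fr}(T;p)=\sum_Dp(D)\mathrm{fr}(T;D)$. Each tile carries a target frequency $\alpha_T$; tile sets are consistent if some distribution on $\mathcal{D}$ attains all target frequencies simultaneously. For a tile set $\mathcal{T}$, $p^*_{\mathcal{T}}$ is the entropy-maximising distribution among those with $\mathrm{fr}(T;p)=\alpha_T$ for all $T\in\mathcal{T}$. $\mathrm{KL}(\mathcal{T}\|\mathcal{U})=\mathrm{KL}(p^*_{\mathcal{T}}\|p^*_{\mathcal{U}})$ (natural log). A tile is exact if its frequency is $0$ or $1$. With $\mathcal{M}=\mathcal{T}\cup\mathcal{U}\cup\mathcal{B}$, $d(\mathcal{T},\mathcal{U};\mathcal{B})=\frac{\mathrm{KL}(\mathcal{M}\|\mathcal{U}\cup\mathcal{B})+\mathrm{KL}(\mathcal{M}\|\mathcal{T}\cup\mathcal{B})}{\mathrm{KL}(\mathcal{M}\|\mathcal{B})}$,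 defined as $1$ if $\mathrm{KL}(\mathcal{M}\|\mathcal{B})=0$. *)

From HB Require Import structures.
From mathcomp Require Import all_boot.
From Stdlib Require Import Reals.
Set Implicit Arguments. Unset Strict Implicit. Unset Printing Implicit Defensive.

Definition bmat (n m : nat) := {ffun 'I_n * 'I_m -> bool}.

Record tile (n m : nat) := Tile { trows : {set 'I_n}; tcols : {set 'I_m} }.

Definition tile_nonempty n m (T : tile n m) : bool :=
  (trows T != set0) && (tcols T != set0).

(* A tile together with its target frequency alpha_T.
   A tile set is a finite list of such constrained tiles. *)
Definition ctile (n m : nat) := (tile n m * R)%type.
Definition tileset (n m : nat) := seq (ctile n m).

Definition rsum {I : finType} (F : I -> R) : R := \big[Rplus/0%R]_(i : I) F i.

Definition fr_mat n m (T : tile n m) (D : bmat n m) : R :=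
  Rmult (Rinv (INR (#|trows T| * #|tcols T|)))
    (\big[Rplus/0%R]_(i in trows T) \big[Rplus/0%R]_(j in tcols T)
        (if D (i, j) then 1%R else 0%R)).

Definition is_dist n m (p : bmat n m -> R) : Prop :=
  (forall D, (0 <= p D)%R) /\ rsum p = 1%R.

Definition fr_dist n m (T : tile n m) (p : bmat n m -> R) : R :=
  rsum (fun D => Rmult (p D) (fr_mat T D)).

Definition satisfies n m (S : tileset n m) (p : bmat n m -> R) : Prop :=
  is_dist p /\ forall c, List.In c S -> fr_dist c.1 p = c.2.

Definition consistent n m (S : tileset n m) : Prop := exists p, satisfies S p.

(* Shannon entropy (natural log); note ln 0 = 0 in Stdlib, so 0 ln 0 = 0. *)
Definition entropy n m (p : bmat n m -> R) : R :=
  Ropp (rsum (fun D => Rmult (p D) (ln (p D)))).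

Definition is_maxent n m (S : tileset n m) (p : bmat n m -> R) : Prop :=
  satisfies S p /\ forall q, satisfies S q -> (entropy q <= entropy p)%R.

Definition KL n m (p q : bmat n m -> R) : R :=
  rsum (fun D => if Rlt_dec 0 (p D) then Rmult (p D) (ln (Rdiv (p D) (q D))) else 0%R).

(* d(T,U;B) from the maxent distributions pM = p*_M, pUB = p*_{U u B},
   pTB = p*_{T u B}, pB = p*_B. *)
Definition dscore n m (pM pUB pTB pB : bmat n m -> R) : R :=
  if Req_EM_T (KL pM pB) 0 then 1%R
  else Rdiv (Rplus (KL pM pUB) (KL pM pTB)) (KL pM pB).

Definition exact_ct n m (c : ctile n m) : Prop := c.2 = 0%R \/ c.2 = 1%R.

(* Everything rests on the Pythagorean identity of maximum entropy: for a
   feasible q, KL(q || p*_S) = H(p*_S) - H(q).  It follows from perturbing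
   p*_S along segments towards q inside the convex feasible set: a
   first-order argument puts the support of q inside that of p*_S, a
   second-order one shows that sum_D q(D) ln p*_S(D) does not depend on q.
   As p*_M is feasible for U u B, T u B and B, every KL term of d becomes an
   entropy difference, and H(p*_{U u B}), H(p*_{T u B}) <= H(p*_B) gives 2.
   For exact tiles p*_S is uniform on the matrices agreeing with a feasible
   D0 on the covered cells, so its entropy is the log of that count, and an
   injection between agreement sets yields
   H(p*_{U u B}) + H(p*_{T u B}) <= H(p*_B) + H(p*_M), whence 1.
   Order: finite sums, x ln x, mixtures, maximum entropy, tile frequencies,
   uniform distributions, agreement sets, exact tile sets, the theorem. *)
From HB Require Import structures.
From mathcomp Require Import all_boot.
From Stdlib Require Import Reals Lra Classical.

Set Implicit Arguments. Unset Strict Implicit.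

Lemma RplusA : associative Rplus. Proof. by move=> *; rewrite Rplus_assoc. Qed.
HB.instance Definition _ := Monoid.isComLaw.Build R 0%R Rplus RplusA Rplus_comm Rplus_0_l.

Local Open Scope R_scope.

Section FiniteSums.
Variable I : finType.
Implicit Types (P : pred I) (F G : I -> R).

Lemma bsum_scal P c F :
  \big[Rplus/0]_(i | P i) (c * F i) = c * \big[Rplus/0]_(i | P i) F i.
Proof. by elim/big_rec2: _ => [|i y1 y2 _ ->]; ring. Qed.

Lemma bsum_opp P F :
  \big[Rplus/0]_(i | P i) (- F i) = - \big[Rplus/0]_(i | P i) F i.
Proof. by elim/big_rec2: _ => [|i y1 y2 _ ->]; ring. Qed.

Lemma bsum_sub P F G : \big[Rplus/0]_(i | P i) (F i - G i) =
  \big[Rplus/0]_(i | P i) F i - \big[Rplus/0]_(i | P i) G i.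
Proof. by rewrite big_split bsum_opp. Qed.

Lemma bsum_le P F G : (forall i, P i -> F i <= G i) ->
  \big[Rplus/0]_(i | P i) F i <= \big[Rplus/0]_(i | P i) G i.
Proof. by move=> H; apply: (big_ind2 (fun a b => a <= b)) => //; move=> *; lra. Qed.

Lemma bsum_ge0 P F : (forall i, P i -> 0 <= F i) -> 0 <= \big[Rplus/0]_(i | P i) F i.
Proof. by move=> H; apply: (big_ind (fun a => 0 <= a)) => //; move=> *; lra. Qed.

Lemma bsum_term P F j : P j -> (forall i, P i -> 0 <= F i) ->
  F j <= \big[Rplus/0]_(i | P i) F i.
Proof.
move=> Pj H; rewrite (bigD1 j) //=.
have : 0 <= \big[Rplus/0]_(i | P i && (i != j)) F i.
  by apply: bsum_ge0 => i /andP [] /H.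
lra.
Qed.

Lemma bsum_eq0 P F : (forall i, P i -> 0 <= F i) ->
  \big[Rplus/0]_(i | P i) F i = 0 -> forall i, P i -> F i = 0.
Proof. by move=> H S0 i Pi; have := bsum_term Pi H; have := H i Pi; lra. Qed.

Lemma bsum_const (A : {set I}) c : \big[Rplus/0]_(i in A) c = INR #|A| * c.
Proof.
rewrite big_const; elim: #|A| => [|k IH]; first by rewrite /=; ring.
by rewrite iterS S_INR IH; ring.
Qed.

Lemma rsum_add F G : rsum (fun i => F i + G i) = rsum F + rsum G.
Proof. exact: big_split. Qed.

Lemma rsum_scal c F : rsum (fun i => c * F i) = c * rsum F.
Proof. exact: bsum_scal. Qed.

Lemma rsum_ext F G : (forall i, F i = G i) -> rsum F = rsum G.
Proof. by move=> H; apply: eq_bigr. Qed.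

Lemma rsum_opp F : rsum (fun i => - F i) = - rsum F.
Proof. exact: bsum_opp. Qed.

Lemma rsum_sub F G : rsum (fun i => F i - G i) = rsum F - rsum G.
Proof. exact: bsum_sub. Qed.

Lemma rsum_le F G : (forall i, F i <= G i) -> rsum F <= rsum G.
Proof. by move=> H; apply: bsum_le. Qed.

Lemma rsum_ge0 F : (forall i, 0 <= F i) -> 0 <= rsum F.
Proof. by move=> H; apply: bsum_ge0. Qed.

Lemma rsum_term F j : (forall i, 0 <= F i) -> F j <= rsum F.
Proof. by move=> H; apply: bsum_term. Qed.

Lemma rsum_eq0 F : (forall i, 0 <= F i) -> rsum F = 0 -> forall i, F i = 0.
Proof. by move=> H S0 i; apply: (bsum_eq0 (P := predT)). Qed.

Lemma rsum_delta (i0 : I) c : rsum (fun i => if i == i0 then c else 0) = c.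
Proof. by rewrite /rsum (bigD1 i0) //= eqxx big1 => [|i /negbTE ->] //; ring. Qed.

Lemma sum1_pos F : rsum F = 1 -> exists i, 0 < F i.
Proof.
move=> F1; apply: NNPP => Hn.
have R0 : rsum (fun _ : I => 0) = 0 by rewrite /rsum big1.
have : rsum F <= rsum (fun _ : I => 0).
  by apply: rsum_le => i; apply: Rnot_lt_le => Hi; apply: Hn; exists i.
lra.
Qed.

Lemma sum1_le1 F : (forall i, 0 <= F i) -> rsum F = 1 -> forall i, F i <= 1.
Proof. by move=> H0 H1 i; rewrite -H1; apply: rsum_term. Qed.

(* Every function on a finite type has a uniform positive lower bound on the
   points where it is positive: 1 / (1 + sum of the inverses) will do. *)
Lemma pos_lower_bound F : exists2 d, 0 < d & forall i, 0 < F i -> d <= F i.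
Proof.
pose W := rsum (fun i => if Rlt_dec 0 (F i) then / F i else 0).
have Winv_ge0 : forall i, 0 <= (if Rlt_dec 0 (F i) then / F i else 0).
  by move=> i; case: Rlt_dec => H /=; [apply/Rlt_le/Rinv_0_lt_compat | lra].
have W0 : 0 <= W by apply: rsum_ge0.
exists (/ (1 + W)); first by apply: Rinv_0_lt_compat; lra.
move=> i Hi.
have HW : / F i <= W by have := rsum_term i Winv_ge0; case: Rlt_dec => /=.
have E : F i * / F i = 1 by field; lra.
have HFW : F i * / F i <= F i * W by apply: Rmult_le_compat_l; lra.
have E' : / (1 + W) * (1 + W) = 1 by field; lra.
have Hinv : 0 < / (1 + W) by apply: Rinv_0_lt_compat; lra.
nra.
Qed.

End FiniteSums.

Lemma ln_le_sub1 y : 0 < y -> ln y <= y - 1.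
Proof. by move=> Hy; have := exp_ineq1_le (ln y); rewrite exp_ln //; lra. Qed.

Lemma ln_div a b : 0 < a -> 0 < b -> ln (a / b) = ln a - ln b.
Proof. by move=> Ha Hb; rewrite /Rdiv ln_mult ?ln_Rinv //; apply: Rinv_0_lt_compat. Qed.

Lemma ln_le x y : 0 < x -> x <= y -> ln x <= ln y.
Proof.
move=> Hx Hxy; case: (Req_dec x y) => [->|Hne]; first lra.
by apply/Rlt_le/ln_increasing; lra.
Qed.

Lemma ln_add_le a b c d : 0 < a -> 0 < b -> 0 < c -> 0 < d -> a * b <= c * d ->
  ln a + ln b <= ln c + ln d.
Proof.
move=> Ha Hb Hc Hd H; rewrite -!ln_mult //.
by apply: ln_le => //; apply: Rmult_lt_0_compat.
Qed.

Lemma xlnx_tangent y z : 0 <= y -> 0 < z ->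
  z * ln z + (ln z + 1) * (y - z) <= y * ln y.
Proof.
move=> Hy Hz; case: (Req_dec y 0) => [->|Hy0]; first by rewrite Rmult_0_l; nra.
have Hy' : 0 < y by lra.
have H := ln_le_sub1 (Rdiv_lt_0_compat _ _ Hz Hy').
rewrite ln_div // in H.
have H2 : y * (ln z - ln y) <= y * (z / y - 1) by apply: Rmult_le_compat_l; lra.
have E : y * (z / y - 1) = z - y by field; lra.
nra.
Qed.

Lemma xlnx_convex x y t : 0 <= x -> 0 <= y -> 0 < t < 1 ->
  ((1 - t) * x + t * y) * ln ((1 - t) * x + t * y) <=
  (1 - t) * (x * ln x) + t * (y * ln y).
Proof.
move=> Hx Hy Ht; set z := (1 - t) * x + t * y.
case: (Req_dec z 0) => [E|Hne].
  have Ex : x = 0 by rewrite /z in E; nra.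
  have Ey : y = 0 by rewrite /z in E; nra.
  by rewrite E Ex Ey !Rmult_0_l; lra.
have Hz : 0 < z by rewrite /z in Hne *; nra.
have H1 := xlnx_tangent Hx Hz; have H2 := xlnx_tangent Hy Hz.
have H3 : (1 - t) * (z * ln z + (ln z + 1) * (x - z)) <= (1 - t) * (x * ln x)
  by apply: Rmult_le_compat_l; lra.
have H4 : t * (z * ln z + (ln z + 1) * (y - z)) <= t * (y * ln y)
  by apply: Rmult_le_compat_l; lra.
have E : (1 - t) * (z * ln z + (ln z + 1) * (x - z)) +
         t * (z * ln z + (ln z + 1) * (y - z)) = z * ln z by rewrite /z; ring.
lra.
Qed.

Lemma xlnx_quadratic x h : 0 < x -> 0 <= x + h ->
  (x + h) * ln (x + h) <= x * ln x + (ln x + 1) * h + h * h / x.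
Proof.
move=> Hx Hxh; case: (Req_dec (x + h) 0) => [E|Hne].
  rewrite E Rmult_0_l; have -> : h = - x by lra.
  have -> : (- x) * (- x) / x = x by field; lra.
  nra.
have Hp : 0 < x + h by lra.
have H := ln_le_sub1 (Rdiv_lt_0_compat _ _ Hp Hx).
rewrite ln_div // in H.
have H2 : (x + h) * (ln (x + h) - ln x) <= (x + h) * ((x + h) / x - 1)
  by apply: Rmult_le_compat_l; lra.
have E : (x + h) * ((x + h) / x - 1) = h + h * h / x by field; lra.
nra.
Qed.

Lemma linear_part_vanishes G C d : 0 < d ->
  (forall t, - d <= t <= d -> 0 <= t * G + t * t * C) -> G = 0.
Proof.
move=> Hd H; apply: NNPP => HG.
have AG : 0 < Rabs G by apply: Rabs_pos_lt.
have AC := Rabs_pos C.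
pose e := Rmin d (Rabs G / (2 * (Rabs C + 1))).
have e0 : 0 < e by apply: Rmin_pos => //; apply: Rdiv_lt_0_compat; lra.
have ed : e <= d := Rmin_l _ _.
have eC : e * (2 * (Rabs C + 1)) <= Rabs G.
  have := Rmin_r d (Rabs G / (2 * (Rabs C + 1))); rewrite -/e => Hr.
  have E : Rabs G / (2 * (Rabs C + 1)) * (2 * (Rabs C + 1)) = Rabs G by field; lra.
  by rewrite -E; apply: Rmult_le_compat_r; lra.
have Hp := H e (conj (ltac:(lra) : - d <= e) ed).
have Hm := H (- e) (conj (ltac:(lra) : - d <= - e) (ltac:(lra) : - e <= d)).
have CC : C <= Rabs C := Rle_abs C.
have : e * Rabs G <= e * e * C.
  by case: (Rle_dec 0 G) => HG0; [rewrite Rabs_right | rewrite Rabs_left]; nra.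
nra.
Qed.

Definition negent (I : finType) (p : I -> R) : R := rsum (fun i => p i * ln (p i)).
Definition mix (I : finType) (p q : I -> R) (t : R) : I -> R :=
  fun i => p i + t * (q i - p i).

Lemma entropyE n m (p : bmat n m -> R) : entropy p = - negent p.
Proof. by []. Qed.

Section Mixtures.
Variables (I : finType) (p q : I -> R).
Hypotheses (p0 : forall i, 0 <= p i) (q0 : forall i, 0 <= q i).

(* Moving towards q with a point i0 that q charges but p misses gains an
   entropy term - t q(i0) ln t, which dominates the linear change for small t. *)
Lemma negent_mix_gain i0 t : p i0 = 0 -> 0 < q i0 -> 0 < t < 1 ->
  negent (mix p q t) <= (1 - t) * negent p + t * negent q + t * q i0 * ln t.
Proof.
move=> pi0 qi0 Ht.
have Hmix i : mix p q t i = (1 - t) * p i + t * q i by rewrite /mix; ring.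
have Hterm i : mix p q t i * ln (mix p q t i) <=
    (1 - t) * (p i * ln (p i)) + t * (q i * ln (q i)) +
    (if i == i0 then t * q i0 * ln t else 0).
  case: eqP => [->|_]; last by rewrite Hmix Rplus_0_r; apply: xlnx_convex.
  rewrite Hmix pi0 Rmult_0_r Rplus_0_l ln_mult; [|lra|by []].
  by apply: Req_le; ring.
by have := rsum_le Hterm; rewrite !rsum_add !rsum_scal rsum_delta.
Qed.

(* chi-square type remainder of the second-order expansion. *)
Definition chi2 : R :=
  rsum (fun i => if Rlt_dec 0 (p i) then (q i - p i) * (q i - p i) / p i else 0).

Lemma negent_mix_quadratic t :
  rsum q = rsum p -> (forall i, 0 < q i -> 0 < p i) ->
  (forall i, 0 <= mix p q t i) ->
  negent (mix p q t) <=
  negent p + t * (rsum (fun i => q i * ln (p i)) - negent p) + t * t * chi2.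
Proof.
move=> Hsum Hsupp Hmix.
have Hterm i : mix p q t i * ln (mix p q t i) <=
    p i * ln (p i) + t * ((q i * ln (p i) - p i * ln (p i)) + (q i - p i)) +
    t * t * (if Rlt_dec 0 (p i) then (q i - p i) * (q i - p i) / p i else 0).
  rewrite /mix; case: Rlt_dec => H /=.
    have := @xlnx_quadratic (p i) (t * (q i - p i)) H (Hmix i).
    have E : t * (q i - p i) * (t * (q i - p i)) / p i =
             t * t * ((q i - p i) * (q i - p i) / p i) by field; lra.
    rewrite E; nra.
  have Hp : p i = 0 by have := p0 i; lra.
  have Hq : q i = 0.
    by case: (Rlt_dec 0 (q i)) => Hq; [have := Hsupp i Hq | have := q0 i]; lra.
  rewrite Hp Hq !(Rmult_0_l, Rmult_0_r, Rminus_0_r, Rplus_0_l, Rplus_0_r).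
  lra.
have := rsum_le Hterm.
rewrite !rsum_add !rsum_scal !rsum_add !rsum_opp Hsum /negent /chi2; lra.
Qed.

Lemma mix_nonneg_small d t : rsum p = 1 -> (forall i, q i <= 1) ->
  (forall i, 0 < q i -> 0 < p i) -> (forall i, 0 < p i -> d <= p i) ->
  - d <= t <= d -> forall i, 0 <= mix p q t i.
Proof.
move=> p1 q1 Hsupp Hd Ht i; rewrite /mix.
have := q0 i; have := q1 i; have := sum1_le1 p0 p1 i.
case: (Rlt_dec 0 (p i)) => H.
  have := Hd i H; case: (Rle_dec 0 t) => Ht0; nra.
have Hp : p i = 0 by have := p0 i; lra.
have Hq : q i = 0.
  by case: (Rlt_dec 0 (q i)) => Hq; [have := Hsupp i Hq | have := q0 i]; lra.
rewrite Hp Hq; lra.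
Qed.

End Mixtures.

Lemma mix_sat n m (S : tileset n m) p q t : satisfies S p -> satisfies S q ->
  (forall D, 0 <= mix p q t D) -> satisfies S (mix p q t).
Proof.
case=> [[p0 p1] pc] [[q0 q1] qc] H; split; first split => //.
  by rewrite /mix rsum_add rsum_scal rsum_sub p1 q1; ring.
move=> c Hc; rewrite /fr_dist.
rewrite (rsum_ext (G := fun D => p D * fr_mat c.1 D +
                     t * (q D * fr_mat c.1 D - p D * fr_mat c.1 D)));
  last by move=> D; rewrite /mix; ring.
have E1 := pc c Hc; have E2 := qc c Hc; rewrite /fr_dist in E1 E2.
by rewrite rsum_add rsum_scal rsum_sub E1 E2; ring.
Qed.

Lemma sat_sub n m (S S' : tileset n m) p :
  satisfies S p -> (forall c, List.In c S' -> List.In c S) -> satisfies S' p.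
Proof. by case=> Hd Hc Hin; split => // c Hc'; apply: Hc; apply: Hin. Qed.

Section MaxEnt.
Variables (n m : nat) (S : tileset n m) (p : bmat n m -> R).
Hypothesis Hp : is_maxent S p.

Lemma maxent_supp q : satisfies S q -> forall D, 0 < q D -> 0 < p D.
Proof.
move=> Hq D0 HqD; apply: NNPP => Hn.
have [[p0 _] _] := Hp.1; have [q0 _] := Hq.1.
have Hp0 : p D0 = 0 by have := p0 D0; lra.
set K := Rabs (entropy p - entropy q).
have HK : entropy p - entropy q <= K := Rle_abs _.
have K0 : 0 <= K := Rabs_pos _.
(* t is chosen so that the gain - t q(D0) ln t = t (K + 1) beats the
   linear loss t (H(p) - H(q)) <= t K. *)
set t := exp (- (K + 1) / q D0).
have Ht : 0 < t < 1.
  split; first exact: exp_pos.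
  rewrite -exp_0; apply: exp_increasing.
  have : 0 < (K + 1) / q D0 by apply: Rdiv_lt_0_compat; lra.
  have -> : - (K + 1) / q D0 = - ((K + 1) / q D0) by rewrite /Rdiv; ring.
  lra.
have Hlnt : q D0 * ln t = - (K + 1) by rewrite /t ln_exp; field; lra.
have Hmix D : 0 <= mix p q t D.
  by rewrite /mix; have := p0 D; have := q0 D; nra.
have Hle := Hp.2 _ (mix_sat Hp.1 Hq Hmix).
have Hgain := negent_mix_gain p0 q0 Hp0 HqD Ht.
rewrite Rmult_assoc Hlnt in Hgain.
rewrite !entropyE in Hle HK; nra.
Qed.

Lemma maxent_orth q : satisfies S q ->
  rsum (fun D => q D * ln (p D)) = negent p.
Proof.
move=> Hq; have [[p0 p1] _] := Hp.1; have [q0 q1] := Hq.1.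
have Hsupp := maxent_supp Hq.
have [d d0 Hd] := pos_lower_bound p.
suff : rsum (fun D => q D * ln (p D)) - negent p = 0 by lra.
apply: (linear_part_vanishes (C := chi2 p q) d0) => t Ht.
have Hmix := mix_nonneg_small p0 q0 p1 (sum1_le1 q0 q1) Hsupp Hd Ht.
have Hle := Hp.2 _ (mix_sat Hp.1 Hq Hmix).
have := negent_mix_quadratic p0 q0 (etrans q1 (esym p1)) Hsupp Hmix.
rewrite !entropyE in Hle; lra.
Qed.

Lemma maxent_KL q : satisfies S q -> KL q p = entropy p - entropy q.
Proof.
move=> Hq; rewrite /KL.
rewrite (rsum_ext (G := fun D => q D * ln (q D) - q D * ln (p D))).
  by rewrite rsum_sub maxent_orth // /entropy /negent; ring.
move=> D; case: Rlt_dec => H /=.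
  by rewrite ln_div //; [ring | exact: maxent_supp Hq _ H].
have -> : q D = 0 by have := Hq.1.1 D; lra.
ring.
Qed.

End MaxEnt.

Definition tile_area n m (T : tile n m) : R := INR (#|trows T| * #|tcols T|).

Definition cellsum n m (T : tile n m) (D : bmat n m) : R :=
  \big[Rplus/0]_(i in trows T) \big[Rplus/0]_(j in tcols T) (if D (i, j) then 1 else 0).

Lemma fr_matE n m (T : tile n m) (D : bmat n m) : fr_mat T D = / tile_area T * cellsum T D.
Proof. by []. Qed.

Section TileFrequency.
Variables (n m : nat) (T : tile n m).
Hypothesis HT : tile_nonempty T.

Lemma tile_area_pos : 0 < tile_area T.
Proof.
move/andP: HT => [h1 h2]; rewrite -card_gt0 in h1; rewrite -card_gt0 in h2.
by apply: lt_0_INR; apply/ltP; rewrite muln_gt0 h1 h2.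
Qed.

Lemma cellsum_ge0 (D : bmat n m) : 0 <= cellsum T D.
Proof. by apply: bsum_ge0 => i _; apply: bsum_ge0 => j _; case: (D (i, j)); lra. Qed.

Lemma cellsum_compl (D : bmat n m) :
  \big[Rplus/0]_(i in trows T) \big[Rplus/0]_(j in tcols T)
     (1 - (if D (i, j) then 1 else 0)) = tile_area T - cellsum T D.
Proof.
rewrite (eq_bigr _ (fun i _ => bsum_sub _ _ _)) bsum_sub.
by rewrite (eq_bigr _ (fun i _ => bsum_const _ 1)) bsum_const /tile_area /cellsum mult_INR; ring.
Qed.

Lemma fr_mat_bounds (D : bmat n m) : 0 <= fr_mat T D <= 1.
Proof.
have k0 := tile_area_pos; have c0 := cellsum_ge0 D.
have c1 : 0 <= tile_area T - cellsum T D.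
  by rewrite -cellsum_compl; apply: bsum_ge0 => i _; apply: bsum_ge0 => j _;
     case: (D (i, j)); lra.
have E : / tile_area T * tile_area T = 1 by field; lra.
rewrite fr_matE; split; first by apply: Rmult_le_pos => //; apply/Rlt_le/Rinv_0_lt_compat.
have : / tile_area T * cellsum T D <= / tile_area T * tile_area T.
  by apply: Rmult_le_compat_l; [apply/Rlt_le/Rinv_0_lt_compat | lra].
lra.
Qed.

Lemma fr_mat0_cells (D : bmat n m) : fr_mat T D = 0 ->
  forall i j, i \in trows T -> j \in tcols T -> D (i, j) = false.
Proof.
rewrite fr_matE => H0 i j Hi Hj; have k0 := tile_area_pos.
have C0 : cellsum T D = 0.
  have E : tile_area T * (/ tile_area T * cellsum T D) = cellsum T D by field; lra.
  by rewrite -E H0 Rmult_0_r.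
have cell_ge0 i' j' : 0 <= (if D (i', j') then 1 else 0) by case: (D (i', j')); lra.
have := bsum_eq0 (fun i' _ => bsum_ge0 (fun j' _ => cell_ge0 i' j')) C0 Hi.
move=> /(bsum_eq0 (fun j' _ => cell_ge0 i j')) /(_ j Hj).
by case: (D (i, j)) => //; lra.
Qed.

Lemma fr_mat1_cells (D : bmat n m) : fr_mat T D = 1 ->
  forall i j, i \in trows T -> j \in tcols T -> D (i, j) = true.
Proof.
rewrite fr_matE => H1 i j Hi Hj; have k0 := tile_area_pos.
have C0 : tile_area T - cellsum T D = 0.
  have E : tile_area T * (/ tile_area T * cellsum T D) = cellsum T D by field; lra.
  by rewrite -E H1; ring.
rewrite -cellsum_compl in C0.
have cell_ge0 i' j' : 0 <= 1 - (if D (i', j') then 1 else 0) by case: (D (i', j')); lra.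
have := bsum_eq0 (fun i' _ => bsum_ge0 (fun j' _ => cell_ge0 i' j')) C0 Hi.
move=> /(bsum_eq0 (fun j' _ => cell_ge0 i j')) /(_ j Hj).
by case: (D (i, j)) => //; lra.
Qed.

Lemma fr_cells (D D' : bmat n m) :
  (forall i j, i \in trows T -> j \in tcols T -> D (i, j) = D' (i, j)) ->
  fr_mat T D = fr_mat T D'.
Proof.
move=> H; rewrite !fr_matE /cellsum; congr (_ * _).
by apply: eq_bigr => i Hi; apply: eq_bigr => j Hj; rewrite H.
Qed.

End TileFrequency.

Lemma exact_supp n m (c : ctile n m) (p : bmat n m -> R) :
  exact_ct c -> tile_nonempty c.1 -> is_dist p -> fr_dist c.1 p = c.2 ->
  forall D, 0 < p D -> fr_mat c.1 D = c.2.
Proof.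
move=> Hexact Hne [p0 p1] Hfr D HD; rewrite /fr_dist in Hfr.
have Hb := fr_mat_bounds Hne.
case: Hexact => E; rewrite E in Hfr *.
  have Hterm D' : 0 <= p D' * fr_mat c.1 D'.
    by apply: Rmult_le_pos => //; case: (Hb D').
  by have := rsum_eq0 Hterm Hfr D => /Rmult_integral; case: (Hb D); lra.
(* frequency 1: the defect 1 - fr vanishes in mean, hence on the support *)
have Hterm D' : 0 <= p D' * (1 - fr_mat c.1 D').
  by apply: Rmult_le_pos => //; case: (Hb D'); lra.
have S0 : rsum (fun D' => p D' * (1 - fr_mat c.1 D')) = 0.
  rewrite (rsum_ext (G := fun D' => p D' - p D' * fr_mat c.1 D')); last by move=> D'; ring.
  by rewrite rsum_sub Hfr p1; ring.
by have := rsum_eq0 Hterm S0 D => /Rmult_integral; lra.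
Qed.

Section Uniform.
Variables (I : finType) (A : {set I}).
Hypothesis HA : (0 < #|A|)%nat.

Definition uniform : I -> R := fun i => if i \in A then / INR #|A| else 0.

Let NA : 0 < INR #|A|. Proof. by apply: lt_0_INR; apply/ltP. Qed.

Lemma rsum_on (c : R) : rsum (fun i => if i \in A then c else 0) = INR #|A| * c.
Proof. by rewrite /rsum -big_mkcond bsum_const. Qed.

Lemma uniform_ge0 i : 0 <= uniform i.
Proof. by rewrite /uniform; case: ifP => _; [apply/Rlt_le/Rinv_0_lt_compat | lra]. Qed.

Lemma uniform_sum : rsum uniform = 1.
Proof. by rewrite rsum_on; field; lra. Qed.

Lemma uniform_avg (f : I -> R) c : (forall i, i \in A -> f i = c) ->
  rsum (fun i => uniform i * f i) = c.
Proof.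
move=> Hf; rewrite (rsum_ext (G := fun i => if i \in A then / INR #|A| * c else 0)).
  by rewrite rsum_on; field; lra.
by move=> i; rewrite /uniform; case: ifP => H; [rewrite Hf | ring].
Qed.

Lemma negent_uniform : negent uniform = - ln (INR #|A|).
Proof.
rewrite /negent (rsum_ext (G := fun i => if i \in A then / INR #|A| * ln (/ INR #|A|) else 0)).
  by rewrite rsum_on ln_Rinv //; field; lra.
by move=> i; rewrite /uniform; case: ifP => _; ring.
Qed.

Lemma negent_ge_uniform (p : I -> R) : (forall i, 0 <= p i) -> rsum p = 1 ->
  (forall i, 0 < p i -> i \in A) -> - ln (INR #|A|) <= negent p.
Proof.
move=> p0 p1 Hsupp.
(* termwise, from ln y <= y - 1 at y = 1 / (p_i |A|) *)
have Hterm i : - (p i * ln (p i)) + (- ln (INR #|A|)) * p i <= uniform i + - p i.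
  case: (Rlt_dec 0 (p i)) => H.
    rewrite /uniform Hsupp //.
    have HpN : 0 < p i * INR #|A| by apply: Rmult_lt_0_compat.
    have L := ln_le_sub1 (Rinv_0_lt_compat _ HpN).
    rewrite ln_Rinv // ln_mult // in L.
    have L2 : p i * (- (ln (p i) + ln (INR #|A|))) <= p i * (/ (p i * INR #|A|) - 1)
      by apply: Rmult_le_compat_l; lra.
    have E : p i * (/ (p i * INR #|A|) - 1) = / INR #|A| - p i by field; lra.
    lra.
  have -> : p i = 0 by have := p0 i; lra.
  by have := uniform_ge0 i; rewrite Rmult_0_l Rmult_0_r; lra.
have := rsum_le Hterm.
by rewrite !rsum_add !rsum_opp rsum_scal uniform_sum p1 /negent; lra.
Qed.

End Uniform.

Section Agreement.
Variables (K V : finType) (D0 : {ffun K -> V}).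

Definition agree (P : pred K) : {set {ffun K -> V}} :=
  [set D : {ffun K -> V} | [forall x, P x ==> (D x == D0 x)]].

Lemma agreeP (P : pred K) (D : {ffun K -> V}) :
  reflect (forall x, P x -> D x = D0 x) (D \in agree P).
Proof.
rewrite inE; apply: (iffP forallP) => H x.
  by move=> Hx; move: (H x); rewrite Hx => /eqP.
by apply/implyP => /H ->.
Qed.

Lemma eq_agree (P Q : pred K) : P =1 Q -> agree P = agree Q.
Proof. by move=> E; apply/setP => D; rewrite !inE; apply: eq_forallb => x; rewrite E. Qed.

(* Log-supermodularity of agreement counts:
   |A(u|b)| |A(t|b)| <= |A(b)| |A(t|u|b)|.  The injection sends (D1, D2) to
   (D1 with the cells of u \ b taken from D2, D1 on u and D2 off u). *)
Lemma card_agree_supermodular (t u b : pred K) :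
  (#|agree [pred x | u x || b x]| * #|agree [pred x | t x || b x]| <=
   #|agree b| * #|agree [pred x | t x || (u x || b x)]|)%nat.
Proof.
pose f := fun DD : {ffun K -> V} * {ffun K -> V} =>
  ([ffun y => if u y && ~~ b y then DD.2 y else DD.1 y],
   [ffun y => if u y then DD.1 y else DD.2 y]).
rewrite -!cardsX.
set A := setX _ _.
have Hinj : {in A &, injective f}.
  move=> [D1 D2] [D1' D2'] /setXP [/= /agreeP P1 /agreeP P2]
         /setXP [/= /agreeP P1' /agreeP P2'] [E1 E2].
  have E1y y := congr1 (fun g : {ffun K -> V} => g y) E1.
  have E2y y := congr1 (fun g : {ffun K -> V} => g y) E2.
  congr pair; apply/ffunP => y; move: (E1y y) (E2y y); rewrite !ffunE;
    case hu: (u y); case hb: (b y) => //= _ _.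
  (* only the cells of u & b remain, where both D2 and D2' agree with D0 *)
  by rewrite P2 ?P2' //= hb orbT.
rewrite -(card_in_imset Hinj); apply: subset_leq_card; apply/subsetP => z.
case/imsetP => -[D1 D2] /setXP [/= /agreeP P1 /agreeP P2] ->.
apply/setXP; split; apply/agreeP => y; rewrite ffunE /=.
  by move=> hb; rewrite hb andbF; apply: P1; rewrite /= hb orbT.
case hu: (u y) => /= H; first by apply: P1; rewrite /= hu.
by apply: P2.
Qed.

End Agreement.

Definition covered n m (X : tileset n m) : pred ('I_n * 'I_m) :=
  fun x => has (fun c : ctile n m => (x.1 \in trows c.1) && (x.2 \in tcols c.1)) X.

Lemma covered_cat n m (X Y : tileset n m) x :
  covered (X ++ Y) x = covered X x || covered Y x.
Proof. exact: has_cat. Qed.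

Lemma coveredP n m (X : tileset n m) i j : reflect
  (exists2 c, List.In c X & (i \in trows c.1) && (j \in tcols c.1)) (covered X (i, j)).
Proof.
rewrite /covered /=; elim: X => [|c X IH] /=; first by right; case.
apply: (iffP orP) => [[H|/IH [c' Hc' H]]|[c' [<-|Hc'] H]].
- by exists c; [left|].
- by exists c'; [right|].
- by left.
- by right; apply/IH; exists c'.
Qed.

Lemma In_cat (A : Type) (x : A) (s1 s2 : seq A) :
  List.In x (s1 ++ s2) <-> List.In x s1 \/ List.In x s2.
Proof. by elim: s1 => [|y s1 IH] /=; tauto. Qed.

Section Exact.
Variables (n m : nat) (M : tileset n m) (D0 : bmat n m).
Hypothesis Hex : forall c, List.In c M -> exact_ct c /\ tile_nonempty c.1.
Hypothesis HD0 : forall c, List.In c M -> fr_mat c.1 D0 = c.2.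
Variable X : tileset n m.
Hypothesis HXM : forall c, List.In c X -> List.In c M.

Lemma agree_fr (D : bmat n m) :
  D \in agree D0 (covered X) <-> forall c, List.In c X -> fr_mat c.1 D = c.2.
Proof.
split.
  move/agreeP => H c Hc; rewrite -(HD0 (HXM Hc)); apply: fr_cells => i j Hi Hj.
  by apply: H; apply/coveredP; exists c => //; rewrite Hi Hj.
move=> H; apply/agreeP => -[i j] /coveredP [c Hc /andP [Hi Hj]].
have HD := H c Hc; have HD0c := HD0 (HXM Hc).
have [[E|E] Hne] := Hex (HXM Hc); rewrite E in HD HD0c.
  by rewrite (fr_mat0_cells Hne HD Hi Hj) (fr_mat0_cells Hne HD0c Hi Hj).
by rewrite (fr_mat1_cells Hne HD Hi Hj) (fr_mat1_cells Hne HD0c Hi Hj).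
Qed.

(* D0 itself lies in the agreement set. *)
Lemma agree_card_pos : (0 < #|agree D0 (covered X)|)%nat.
Proof. by rewrite card_gt0; apply/set0Pn; exists D0; apply/agree_fr => c Hc; apply: HD0 (HXM Hc). Qed.

(* The maximum-entropy distribution of X is uniform on the agreement set:
   its entropy is the logarithm of the number of feasible matrices. *)
Lemma maxent_exact_entropy p :
  is_maxent X p -> entropy p = ln (INR #|agree D0 (covered X)|).
Proof.
move=> [Hp Hmax]; set A := agree D0 (covered X).
have HA : (0 < #|A|)%nat := agree_card_pos.
apply: Rle_antisym.
  have Hsupp D : 0 < p D -> D \in A.
    move=> HD; apply/agree_fr => c Hc.
    have [Hexc Hnec] := Hex (HXM Hc).
    exact: exact_supp Hexc Hnec Hp.1 (Hp.2 c Hc) D HD.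
  rewrite entropyE -[ln _]Ropp_involutive; apply: Ropp_le_contravar.
  exact (negent_ge_uniform HA Hp.1.1 Hp.1.2 Hsupp).
have Hu : satisfies X (uniform A).
  split; first by split; [exact: uniform_ge0 | exact: uniform_sum].
  by move=> c Hc; apply: uniform_avg => // D /agree_fr; apply.
apply: Rle_trans (Hmax _ Hu); rewrite entropyE negent_uniform // Ropp_involutive.
exact: Rle_refl.
Qed.

End Exact.

Lemma exact_entropy_supermodular n m (T U B : tileset n m) pM pUB pTB pB :
  (forall c, List.In c (T ++ U ++ B) -> exact_ct c /\ tile_nonempty c.1) ->
  is_maxent (T ++ U ++ B) pM -> is_maxent (U ++ B) pUB ->
  is_maxent (T ++ B) pTB -> is_maxent B pB ->
  entropy pUB + entropy pTB <= entropy pB + entropy pM.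
Proof.
move=> Hex HM HUB HTB HB.
have [D0 HD0] := sum1_pos HM.1.1.2.
have Hsat0 c (Hc : List.In c (T ++ U ++ B)) : fr_mat c.1 D0 = c.2.
  have [Hexc Hnec] := Hex c Hc; exact: exact_supp Hexc Hnec HM.1.1 (HM.1.2 c Hc) D0 HD0.
have count_entropy X (HX : forall c, List.In c X -> List.In c (T ++ U ++ B)) :=
  conj (maxent_exact_entropy Hex Hsat0 HX) (agree_card_pos Hex Hsat0 HX).
have [EUB NUB] := count_entropy (U ++ B) (fun c => ltac:(rewrite !In_cat; tauto)).
have [ETB NTB] := count_entropy (T ++ B) (fun c => ltac:(rewrite !In_cat; tauto)).
have [EB NB] := count_entropy B (fun c => ltac:(rewrite !In_cat; tauto)).
have [EM NM] := count_entropy (T ++ U ++ B) (fun c Hc => Hc).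
rewrite (EUB _ HUB) (ETB _ HTB) (EB _ HB) (EM _ HM).
apply: ln_add_le; try by apply: lt_0_INR; apply/ltP.
rewrite -!mult_INR; apply/le_INR/leP.
rewrite !(eq_agree D0 (covered_cat _ _)).
rewrite (eq_agree D0 (fun x => congr1 (orb _) (covered_cat U B x))).
exact: card_agree_supermodular.
Qed.

Lemma dscore_le n m (pM pUB pTB pB : bmat n m -> R) c : 1 <= c ->
  0 <= KL pM pB -> KL pM pUB + KL pM pTB <= c * KL pM pB ->
  dscore pM pUB pTB pB <= c.
Proof.
move=> c1 K0 H; rewrite /dscore; case: Req_EM_T => // Hne.
have Kpos : 0 < KL pM pB by lra.
apply: (Rmult_le_reg_r (KL pM pB)) => //.
by rewrite /Rdiv Rmult_assoc Rinv_l; lra.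
Qed.

Local Close Scope R_scope.

Theorem theorem6 (n m : nat) (Hn : (0 < n)%N) (Hm : (0 < m)%N)
  (T U B : tileset n m)
  (Hne : forall c, List.In c (T ++ U ++ B) -> tile_nonempty c.1)
  (Hcons : consistent (T ++ U ++ B))
  (pM pUB pTB pB : bmat n m -> R)
  (HM : is_maxent (T ++ U ++ B) pM)
  (HUB : is_maxent (U ++ B) pUB)
  (HTB : is_maxent (T ++ B) pTB)
  (HB : is_maxent B pB) :
  (dscore pM pUB pTB pB <= 2)%R /\
  ((forall c, List.In c (T ++ U ++ B) -> exact_ct c) ->
     (dscore pM pUB pTB pB <= 1)%R).
Proof.
have inUB c : List.In c (U ++ B) -> List.In c (T ++ U ++ B) by rewrite !In_cat; tauto.
have inTB c : List.In c (T ++ B) -> List.In c (T ++ U ++ B) by rewrite !In_cat; tauto.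
have inB c : List.In c B -> List.In c (T ++ U ++ B) by rewrite !In_cat; tauto.
have inB_UB c : List.In c B -> List.In c (U ++ B) by rewrite In_cat; tauto.
have inB_TB c : List.In c B -> List.In c (T ++ B) by rewrite In_cat; tauto.
(* p*_M is feasible for the three smaller tile sets: Pythagorean identities. *)
have K1 := maxent_KL HUB (sat_sub HM.1 inUB).
have K2 := maxent_KL HTB (sat_sub HM.1 inTB).
have K0 := maxent_KL HB (sat_sub HM.1 inB).
(* Fewer constraints allow more entropy. *)
have eM := HB.2 _ (sat_sub HM.1 inB).
have eUB := HB.2 _ (sat_sub HUB.1 inB_UB).
have eTB := HB.2 _ (sat_sub HTB.1 inB_TB).
split; first by apply: dscore_le; rewrite ?K0 ?K1 ?K2; lra.
move=> Hexact.
have Hex c (Hc : List.In c (T ++ U ++ B)) := conj (Hexact c Hc) (Hne c Hc).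
have Hsup := exact_entropy_supermodular Hex HM HUB HTB HB.
by apply: dscore_le; rewrite ?K0 ?K1 ?K2; lra.
Qed.
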